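(* Let $X\in\mathbb{R}^{N\times D}$, $y\in\mathbb{R}^N$ be partitioned into row blocks $X_i\in\mathbb{R}^{N_i\times D}$, $y_i\in\mathbb{R}^{N_i}$, $i\in[E]$, with $\sum_i N_i = N$. Write $Z = X^\top X$ and $Z_i = X_i^\top X_i$, and assume every $Z_i$ is invertible (hence so is $Z=\sum_i Z_i$). Let $w^* = Z^{-1}X^\top y$ and $w_i^* = Z_i^{-1}X_i^\top y_i$. Suppose that for each $i\in[E]$ there are $\beta_i\in\mathbb{R}^D$ and $r_i\in\mathbb{R}^{N_i}$ with $y_i = X_i\beta_i + r_i$. Define $\eta_i = Z_i^{-1}X_i^\top r_i$, $\eta = Z^{-1}X^\top r$ where $r\in\mathbb{R}^N$ is the concatenation of $r_1,\dots,r_E$, and for $i\neq j$ let $\Delta_{ij} = Z^{-1}Z_j(\beta_i-\beta_j)$ and $\Delta_i = \sum_{j\neq i}\Delta_{ij}$. Let $\gamma\in(0,1]$. If $$\|\Delta_i\| \ge \|\beta_i + \eta\| + \frac{1}{\sqrt{\gamma}}\|\beta_i+\eta_i\| \quad\text{for all } i\in[E],$$ then $\max_{i\in[E]}\|w_i^*\|^2 \le \gamma\|w^*\|^2$. Moreover, if $\|\eta\|\le \min_{i\in[E]}\|\beta_i\|$ and $\|\eta_i\|\le\|\beta_i\|$ for all $i\in[E]$, then the same conclusion $\max_{i}\|w_i^*\|^2\le\gamma\|w^*\|^2$ holds under the condition $\min_{i\in[E]}\big\{\|\Delta_i\| - \tfrac{4}{\sqrt{\gamma}}\|\beta_i\|\big\}\ge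 0$.
   Context: $\|\cdot\|$ denotes the Euclidean norm and $[E]=\{1,\dots,E\}$. $w^*$ is the least-squares solution of $\min_w\|Xw-y\|^2$ and $w_i^*$ that of $\min_{w_i}\|X_iw_i-y_i\|^2$. *)

(* Real linear algebra over an arbitrary real closed field R
   (contains the reals as a special case). *)
From HB Require Import structures.
From mathcomp Require Import all_boot all_order all_algebra.
Set Implicit Arguments. Unset Strict Implicit. Unset Printing Implicit Defensive.
Import Order.TTheory GRing.Theory Num.Theory.
Local Open Scope ring_scope.

Definition enorm (R : rcfType) (n : nat) (v : 'cV[R]_n) : R :=
  Num.sqrt (\sum_(k < n) (v k 0) ^+ 2).

From HB Require Import structures.
From mathcomp Require Import all_boot all_order all_algebra.
From mathcomp Require Import ring lra.
Import Order.TTheory GRing.Theory Num.Theory.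
Local Open Scope ring_scope.

(* Each local solution is w_i* = beta_i + eta_i, and the pooled residual
   Delta_i = sum_{j <> i} Z^-1 Z_j (beta_i - beta_j) equals beta_i + eta - w*.
   The triangle inequality gives ||Delta_i|| <= ||beta_i + eta|| + ||w*||, so
   the hypothesis forces ||w_i*|| / sqrt gamma <= ||w*||.  For the second
   condition, ||beta_i + eta|| and ||beta_i + eta_i|| are both at most
   2 ||beta_i||, and 2 + 2 / sqrt gamma <= 4 / sqrt gamma. *)

Section EuclideanNorm.
Context {R : rcfType} {n : nat}.
Implicit Types u v : 'cV[R]_n.

Definition sqnorm u := \sum_(k < n) u k 0 ^+ 2.
Definition dotc u v := \sum_(k < n) u k 0 * v k 0.

Lemma sqnorm_ge0 u : 0 <= sqnorm u.
Proof. by apply: sumr_ge0 => k _; apply: sqr_ge0. Qed.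

Lemma enorm_ge0 u : 0 <= enorm u.
Proof. exact: sqrtr_ge0. Qed.

Lemma sqr_enorm u : enorm u ^+ 2 = sqnorm u.
Proof. by rewrite sqr_sqrtr // sqnorm_ge0. Qed.

Lemma sqnormD u v : sqnorm (u + v) = sqnorm u + 2 * dotc u v + sqnorm v.
Proof.
rewrite /sqnorm /dotc mulr_sumr -!big_split /=.
by apply: eq_bigr => k _; rewrite mxE; ring.
Qed.

Lemma lagrange_identity u v :
  \sum_(k < n) \sum_(l < n) (u k 0 * v l 0 - u l 0 * v k 0) ^+ 2
  = 2 * (sqnorm u * sqnorm v - dotc u v ^+ 2).
Proof.
have sum_prod (f g : 'I_n -> R) :
    \sum_(k < n) \sum_(l < n) f k * g l = (\sum_k f k) * (\sum_l g l).
  by rewrite mulr_suml; apply: eq_bigr => k _; rewrite mulr_sumr.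
transitivity (\sum_(k < n) \sum_(l < n)
    (u k 0 ^+ 2 * v l 0 ^+ 2 + v k 0 ^+ 2 * u l 0 ^+ 2
     - 2 * (u k 0 * v k 0) * (u l 0 * v l 0))).
  by apply: eq_bigr => k _; apply: eq_bigr => l _; ring.
under eq_bigr do rewrite sumrB big_split /=.
rewrite sumrB big_split /= !sum_prod -mulr_sumr /sqnorm /dotc; ring.
Qed.

Lemma dotc_le_enorm u v : dotc u v <= enorm u * enorm v.
Proof.
have cs : dotc u v ^+ 2 <= sqnorm u * sqnorm v.
  have : 0 <= \sum_(k < n) \sum_(l < n) (u k 0 * v l 0 - u l 0 * v k 0) ^+ 2.
    by do 2![apply: sumr_ge0 => ? _]; apply: sqr_ge0.
  by rewrite lagrange_identity; nra.
apply: le_trans (ler_norm _) _.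
by rewrite -sqrtrM ?sqnorm_ge0 // -sqrtr_sqr ler_sqrt // mulr_ge0 ?sqnorm_ge0.
Qed.

Lemma enormD u v : enorm (u + v) <= enorm u + enorm v.
Proof.
rewrite -(ler_pXn2r (n := 2)) // ?nnegrE ?addr_ge0 ?enorm_ge0 //.
rewrite sqr_enorm sqnormD -!sqr_enorm.
by have := dotc_le_enorm u v; nra.
Qed.

Lemma enormN u : enorm (- u) = enorm u.
Proof. by congr Num.sqrt; apply: eq_bigr => k _; rewrite mxE sqrrN. Qed.

Lemma enormB u v : enorm (u - v) <= enorm u + enorm v.
Proof. by rewrite -(enormN v) enormD. Qed.

End EuclideanNorm.

Lemma tr_mxcol_mul_mxcol {R : pzSemiRingType} {k m n : nat} {p_ : 'I_k -> nat}
    (A_ : forall i, 'M[R]_(p_ i, m)) (B_ : forall i, 'M[R]_(p_ i, n)) :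
  (\mxcol_i A_ i)^T *m \mxcol_i B_ i = \sum_i (A_ i)^T *m B_ i.
Proof. by rewrite tr_mxcol mul_mxrow_mxcol. Qed.

Lemma gram_quad_form {R : comPzRingType} {m n : nat}
    (v : 'rV[R]_n) (A : 'M[R]_(m, n)) :
  (v *m (A^T *m A) *m v^T) 0 0 = \sum_k (v *m A^T) 0 k ^+ 2.
Proof.
have -> : v *m (A^T *m A) *m v^T = (v *m A^T) *m (v *m A^T)^T.
  by rewrite trmx_mul trmxK !mulmxA.
by rewrite mxE; apply: eq_bigr => k _; rewrite [in RHS]expr2 !mxE.
Qed.

Section SumOfGramMatrices.
Context {R : realFieldType} {k n : nat} {p_ : 'I_k -> nat}.
Variable A_ : forall i, 'M[R]_(p_ i, n).

Lemma mulmx_sum_gram_eq0 (v : 'rV[R]_n) :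
  v *m \sum_i (A_ i)^T *m A_ i = 0 -> forall i, v *m (A_ i)^T = 0.
Proof.
move=> vZ0 i; apply/matrixP => a l; rewrite [a]ord1 [RHS]mxE.
have sq_ge0 j : 0 <= \sum_l (v *m (A_ j)^T) 0 l ^+ 2.
  by apply: sumr_ge0 => ? _; apply: sqr_ge0.
have : \sum_j \sum_l (v *m (A_ j)^T) 0 l ^+ 2 = 0.
  under eq_bigr do rewrite -gram_quad_form.
  by rewrite -summxE -mulmx_suml -mulmx_sumr vZ0 !mul0mx mxE.
move/psumr_eq0P => /(_ (fun j _ => sq_ge0 j) i isT) /psumr_eq0P.
by move=> /(_ (fun l _ => sqr_ge0 _) l isT) /eqP; rewrite sqrf_eq0 => /eqP.
Qed.

Lemma unitmx_sum_gram i0 :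
  (A_ i0)^T *m A_ i0 \in unitmx -> \sum_i (A_ i)^T *m A_ i \in unitmx.
Proof.
move=> Z0_unit; rewrite unitmxE unitfE; apply/det0P => -[v /negP nz_v vZ0].
apply: nz_v; apply/eqP.
have : v *m ((A_ i0)^T *m A_ i0) = 0 by rewrite mulmxA mulmx_sum_gram_eq0 ?mul0mx.
move/(congr1 (mulmx^~ (invmx ((A_ i0)^T *m A_ i0)))).
by rewrite -mulmxA mulmxV // mulmx1 mul0mx.
Qed.

End SumOfGramMatrices.

Lemma lsq_solution_model {R : comUnitRingType} {m n : nat}
    (A : 'M[R]_(m, n)) (b : 'cV[R]_n) (r : 'cV[R]_m) :
  A^T *m A \in unitmx ->
  invmx (A^T *m A) *m A^T *m (A *m b + r) = b + invmx (A^T *m A) *m A^T *m r.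
Proof.
by move=> Zu; rewrite mulmxDr mulmxA -(mulmxA _ A^T) mulVmx // mul1mx.
Qed.

(* Z^-1 Z_j are weights summing to the identity, so the weighted differences
   b_i - b_j add up to b_i minus the weighted mean of the b_j. *)
Lemma sum_weighted_diff {R : comUnitRingType} {I : finType} {n : nat}
    (Z_ : I -> 'M[R]_n) (b_ : I -> 'cV[R]_n) i :
  let Z := \sum_j Z_ j in
  Z \in unitmx ->
  \sum_(j | j != i) invmx Z *m Z_ j *m (b_ i - b_ j)
  = b_ i - invmx Z *m \sum_j Z_ j *m b_ j.
Proof.
move=> Z Zu.
have -> : \sum_(j | j != i) invmx Z *m Z_ j *m (b_ i - b_ j)
          = \sum_j invmx Z *m Z_ j *m (b_ i - b_ j).
  by rewrite [RHS](bigD1 i) //= subrr mulmx0 add0r.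
under eq_bigr do rewrite mulmxBr.
rewrite sumrB -mulmx_suml -mulmx_sumr mulVmx // mul1mx mulmx_sumr.
by congr (_ - _); apply: eq_bigr => j _; rewrite mulmxA.
Qed.

Section RealBounds.
Variable R : realFieldType.
Implicit Types a b c d e p q s : R.

Lemma ler_sqr_of_triangle a b c d s : 0 < s -> 0 <= a -> 0 <= c ->
  b + s^-1 * a <= d -> d <= b + c -> a ^+ 2 <= s ^+ 2 * c ^+ 2.
Proof.
move=> s_gt0 a_ge0 c_ge0 lo hi.
have a_le : a <= s * c by rewrite -ler_pdivrMl //; lra.
by rewrite -exprMn ler_pXn2r // nnegrE // (le_trans a_ge0).
Qed.

Lemma triangle_gap_of_double_bounds e p q d s : 0 < s -> s <= 1 -> 0 <= e ->
  p <= 2 * e -> q <= 2 * e -> 0 <= d - 4 / s * e -> p + s^-1 * q <= d.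
Proof.
move=> s_gt0 s_le1 e_ge0 p_le q_le d_ge.
have t_ge1 : 1 <= s^-1 by rewrite invf_ge1.
have tq_le : s^-1 * q <= s^-1 * (2 * e) by rewrite ler_wpM2l // invr_ge0 ltW.
rewrite -mulrA in d_ge; nra.
Qed.

End RealBounds.

Theorem theorem2 (R : rcfType) (E D : nat) (N_ : 'I_E -> nat)
  (X_ : forall i : 'I_E, 'M[R]_(N_ i, D))
  (y_ : forall i : 'I_E, 'cV[R]_(N_ i))
  (beta_ : 'I_E -> 'cV[R]_D)
  (r_ : forall i : 'I_E, 'cV[R]_(N_ i))
  (gamma : R) :
  (forall i, (X_ i)^T *m X_ i \in unitmx) ->
  (forall i, y_ i = X_ i *m beta_ i + r_ i) ->
  0 < gamma -> gamma <= 1 ->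
  let X : 'M[R]_(\sum_i N_ i, D) := \mxcol_i X_ i in
  let y : 'cV[R]_(\sum_i N_ i) := \mxcol_i y_ i in
  let r : 'cV[R]_(\sum_i N_ i) := \mxcol_i r_ i in
  let Z := X^T *m X in
  let Z_ i := (X_ i)^T *m X_ i in
  let wstar := invmx Z *m X^T *m y in
  let wstar_ i := invmx (Z_ i) *m (X_ i)^T *m y_ i in
  let eta := invmx Z *m X^T *m r in
  let eta_ i := invmx (Z_ i) *m (X_ i)^T *m r_ i in
  let Delta_ i j := invmx Z *m Z_ j *m (beta_ i - beta_ j) in
  let Delta i := \sum_(j | j != i) Delta_ i j in
  let maxw := \big[Num.max/0]_(i < E) (enorm (wstar_ i)) ^+ 2 in
  ((forall i, enorm (Delta i) >=
       enorm (beta_ i + eta) + (Num.sqrt gamma)^-1 * enorm (beta_ i + eta_ i)) ->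
    maxw <= gamma * (enorm wstar) ^+ 2)
  /\
  ((forall i, enorm eta <= enorm (beta_ i)) ->
   (forall i, enorm (eta_ i) <= enorm (beta_ i)) ->
   (forall i, 0 <= enorm (Delta i) - 4 / Num.sqrt gamma * enorm (beta_ i)) ->
    maxw <= gamma * (enorm wstar) ^+ 2).
Proof.
move=> Zu yE g_gt0 g_le1 X y r Z Z_ wstar wstar_ eta eta_ Delta_ Delta maxw.
set s := Num.sqrt gamma.
have ZE : Z = \sum_j Z_ j by exact: tr_mxcol_mul_mxcol.
have wstarE : wstar = invmx Z *m \sum_j Z_ j *m beta_ j + eta.
  rewrite /wstar /eta -!mulmxA -mulmxDr /X /y /r !tr_mxcol_mul_mxcol -big_split.
  by congr (_ *m _); apply: eq_bigr => j _; rewrite yE mulmxDr mulmxA.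
have DeltaE i : Delta i = beta_ i + eta - wstar.
  rewrite /Delta /Delta_ ZE sum_weighted_diff; last exact: unitmx_sum_gram (Zu i).
  by rewrite -ZE wstarE opprD addrACA subrr addr0.
have block_bound i :
    enorm (beta_ i + eta) + s^-1 * enorm (beta_ i + eta_ i) <= enorm (Delta i) ->
    enorm (wstar_ i) ^+ 2 <= gamma * enorm wstar ^+ 2.
  move=> gap; rewrite /wstar_ yE lsq_solution_model ?Zu // -(sqr_sqrtr (ltW g_gt0)).
  apply: ler_sqr_of_triangle gap _; rewrite ?sqrtr_gt0 ?enorm_ge0 // DeltaE.
  exact: enormB.
have maxw_le : (forall i, enorm (wstar_ i) ^+ 2 <= gamma * enorm wstar ^+ 2) ->
    maxw <= gamma * enorm wstar ^+ 2.
  by move=> h; apply: bigmax_le => [|i _]; [rewrite mulr_ge0 ?sqr_ge0 ?ltW | exact: h].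
split=> [gap | eta_le eta_i_le gap]; apply: maxw_le => i; apply: block_bound.
  exact: gap.
apply: triangle_gap_of_double_bounds (gap i); rewrite ?enorm_ge0 ?sqrtr_gt0 //.
- by rewrite -sqrtr1 ler_sqrt.
- by have := enormD (beta_ i) eta; have := eta_le i; lra.
- by have := enormD (beta_ i) (eta_ i); have := eta_i_le i; lra.
Qed.
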